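(* Let $(q(\ell))_{\ell\in\mathbb{Z}}\subset\mathbb{C}$ and $(p(\ell,z))_{(\ell,z)\in\mathbb{Z}^2}\subset\mathbb{C}$ satisfy $q(\ell)=0$ for all $\ell<0$ and $p(\ell,z)=0$ for all $\ell\in\mathbb{Z}$, $z<0$. Define the iterates $q(\ell,0):=\ddot r(\ell)$ and $q(\ell,m):=\ddot r(\ell)+\sum_{z\in\mathbb{Z}}q(\ell-z,m-1)\ddot p_+(\ell,z)$ for $(\ell,m)\in\mathbb{Z}\times\mathbb{N}$. Then for each $(\ell,m)\in\mathbb{Z}\times\mathbb{N}_0$, $$q(\ell,m)=\sum_{z\in\mathbb{Z}}\ddot r(\ell-z)\,\alpha\{\ddot p_+\}(\ell,z,m).$$
   Context: $r(\ell):=\sum_{z\in\mathbb{Z}}q(\ell-z)p(\ell,z)$. $L_0:=\sup\{L\in\mathbb{N}_0:p(\ell,0)\neq0\text{ for all }0\le\ell<L\}\in\mathbb{N}_0\cup\{\infty\}$, assumed $\ge1$; $\mathbb{L}:=\{\ell\in\mathbb{Z}:0\le\ell<L_0\}$. $\ddot r(\ell):=\frac{r(\ell)}{p(\ell,0)}\mathbf 1_{\mathbb{L}}(\ell)$, $\ddot p_+(\ell,z):=\big(\delta_{z,0}-\frac{p(\ell,z)}{p(\ell,0)}\big)\mathbf 1_{\mathbb{L}}(\ell)$ ($\delta_{z,0}=1$ if $z=0$, else $0$). Convolution powers: $\ddot p_+^{*0}(\ell,z):=\delta_{z,0}$, $\ddot p_+^{*j}(\ell,z):=\sum_{z_1\in\mathbb{Z}}\ddot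 p_+(\ell,z_1)\ddot p_+^{*(j-1)}(\ell-z_1,z-z_1)$ for $j\ge1$. $\alpha\{\ddot p_+\}(\ell,z,x):=\sum_{j=0}^{\lfloor x\rfloor}\ddot p_+^{*j}(\ell,z)$ for $(\ell,z,x)\in\mathbb{Z}^2\times\mathbb{R}$. *)

From HB Require Import structures.
From mathcomp Require Import all_boot all_order all_algebra.
From mathcomp Require Import all_classical all_reals.
From mathcomp Require Import complex.
Set Implicit Arguments. Unset Strict Implicit. Unset Printing Implicit Defensive.
Import Order.TTheory GRing.Theory Num.Theory.
Local Open Scope classical_set_scope.
Local Open Scope ring_scope.

Section Defs.
Variable R : realType.
Local Notation C := (R[i])%C.

(* Sum over z in Z, of a finitely supported family (fsbigop: 0 if the support is infinite). *)
Definition zsum (f : int -> C) : C := \sum_(z \in [set: int]) f z.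

Variables (q : int -> C) (p : int -> int -> C).

Definition r (l : int) : C := zsum (fun z => q (l - z) * p l z).

(* l \in LL  <->  0 <= l < L_0, where L_0 = sup{L : p(k,0) <> 0 for all 0 <= k < L} *)
Definition inLL (l : int) : bool :=
  (0 <= l) && [forall k : 'I_(`|l|%N.+1), p (k%:Z) 0 != 0].

Definition ind (b : bool) : C := if b then 1 else 0.

Definition rdd (l : int) : C := r l / p l 0 * ind (inLL l).

Definition pdd (l z : int) : C := (ind (z == 0) - p l z / p l 0) * ind (inLL l).

Fixpoint pconv (j : nat) (l z : int) : C :=
  match j with
  | 0 => ind (z == 0)
  | j'.+1 => zsum (fun z1 => pdd l z1 * pconv j' (l - z1) (z - z1))
  end.

Definition alpha (l z : int) (x : R) : C :=
  if 0 <= x then \sum_(j < (Num.truncn x).+1) pconv j l z else 0.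

Fixpoint qit (m : nat) (l : int) : C :=
  match m with
  | 0 => rdd l
  | m'.+1 => rdd l + zsum (fun z => qit m' (l - z) * pdd l z)
  end.

End Defs.

From HB Require Import structures.
From mathcomp Require Import all_boot all_order all_algebra.
From mathcomp Require Import all_classical all_reals.
From mathcomp Require Import complex zify.
Set Implicit Arguments. Unset Strict Implicit. Unset Printing Implicit Defensive.
Import Order.TTheory GRing.Theory Num.Theory.
Local Open Scope ring_scope.

(* Write (P u)(l) := sum_z pdd(l,z) u(l-z).  The recursion reads
   q(.,m) = rdd + P q(.,m-1), hence q(.,m) = sum_(j <= m) P^j rdd, and
   exchanging the order of summation shows that P^j is the convolution with
   the j-th convolution power of pdd.  Every sum over z is finite because
   rdd, pdd(l,.) and the convolution powers vanish at negative arguments, so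
   z only ranges over 0 <= z <= |l|. *)

Section Zsum.
Variable R : realType.
Local Notation C := (R[i])%C.

Definition causal (u : int -> C) : Prop := forall z, z < 0 -> u z = 0.

Definition vanishes_outside (n : nat) (f : int -> C) : Prop :=
  forall z, (z < 0) || (n%:Z < z) -> f z = 0.

Lemma zsum_ord n (f : int -> C) :
  vanishes_outside n f -> zsum f = \sum_(i < n.+1) f i%:Z.
Proof.
move=> hf; rewrite /zsum.
rewrite -(fsbig_widen [set` [seq i%:Z | i <- iota 0 n.+1]] [set: int] f) //; last first.
  move=> z [_ hz]; apply: hf; apply: contra_notT hz; rewrite negb_or -!leNgt.
  move=> /andP[z_ge0 z_le]; apply/mapP; exists `|z|%N; rewrite ?mem_iota; lia.
rewrite -fsbig_seq ?map_inj_uniq ?iota_uniq //; last by move=> i j [].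
by rewrite big_map -(subn0 n.+1) -/(index_iota 0 n.+1) big_mkord.
Qed.

Lemma zsum_shift (f : int -> C) (c : int) : zsum (fun z => f (z + c)) = zsum f.
Proof.
rewrite /zsum (reindex_fsbigT (fun z => z + c) f) //.
by exists (fun z => z - c) => z; rewrite ?addrK ?subrK.
Qed.

Lemma zsum_sum n (I : Type) (r : seq I) (F : I -> int -> C) :
  (forall i, vanishes_outside n (F i)) ->
  zsum (fun z => \sum_(i <- r) F i z) = \sum_(i <- r) zsum (F i).
Proof.
move=> hF; rewrite (zsum_ord (n := n)) => [|z hz]; last first.
  by rewrite big1 // => i _; apply: hF.
rewrite exchange_big; apply: eq_bigr => i _.
by rewrite (zsum_ord (hF i)).
Qed.

Lemma zsum_exchange n (F : int -> int -> C) :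
  (forall z, vanishes_outside n (F z)) -> (forall w, vanishes_outside n (F^~ w)) ->
  zsum (fun z => zsum (F z)) = zsum (fun w => zsum (F^~ w)).
Proof.
move=> hFz hFw.
have hz : vanishes_outside n (fun z => zsum (F z)).
  by move=> z hz; rewrite /zsum fsbig1 // => w _; apply: hFw.
have hw : vanishes_outside n (fun w => zsum (F^~ w)).
  by move=> w hw; rewrite /zsum fsbig1 // => z _; apply: hFz.
rewrite (zsum_ord hz) (zsum_ord hw).
under eq_bigr do rewrite (zsum_ord (hFz _)).
under [RHS]eq_bigr do rewrite (zsum_ord (hFw _)).
exact: exchange_big.
Qed.

Lemma causal_conv_vanishes (f g : int -> C) l : causal f -> causal g ->
  vanishes_outside `|l| (fun z => f z * g (l - z)).
Proof.
move=> hf hg z /orP[z_lt0|z_gt]; first by rewrite hf ?mul0r.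
by rewrite hg ?mulr0 //; lia.
Qed.

End Zsum.

Section Kernel.
Variables (R : realType) (q : int -> R[i]%C) (p : int -> int -> R[i]%C).
Local Notation C := (R[i])%C.
Hypothesis hp : forall l z : int, z < 0 -> p l z = 0.

Lemma rdd_causal : causal (rdd q p).
Proof. by move=> l l_lt0; rewrite /rdd /inLL leNgt l_lt0 /= /ind mulr0. Qed.

Lemma pdd_causal l : causal (pdd p l).
Proof. by move=> z z_lt0; rewrite /pdd hp // mul0r lt_eqF // /ind subr0 mul0r. Qed.

Lemma pconv_causal j l : causal (pconv p j l).
Proof.
elim: j l => [|j IH] l z z_lt0 /=; first by rewrite lt_eqF.
rewrite /zsum fsbig1 // => k _; have [k_lt0|k_ge0] := ltrP k 0.
  by rewrite pdd_causal ?mul0r.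
by rewrite IH ?mulr0 //; lia.
Qed.

Definition pdd_iter (j : nat) (u : int -> C) (l : int) : C :=
  zsum (fun z => pconv p j l z * u (l - z)).

Lemma pdd_iter0 u l : pdd_iter 0 u l = u l.
Proof.
rewrite /pdd_iter (zsum_ord (n := 0)) => [|z hz]; last first.
  by rewrite /= /ind ifF ?mul0r //; apply/eqP; lia.
by rewrite big_ord1 /= subr0 mul1r.
Qed.

Lemma pdd_iter_causal j u : causal u -> causal (pdd_iter j u).
Proof.
move=> hu l l_lt0; rewrite /pdd_iter /zsum fsbig1 // => z _.
have [z_lt0|z_ge0] := ltrP z 0; first by rewrite pconv_causal ?mul0r.
by rewrite hu ?mulr0 //; lia.
Qed.

Lemma pdd_iterS j u l : causal u ->
  pdd_iter j.+1 u l = zsum (fun k => pdd p l k * pdd_iter j u (l - k)).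
Proof.
move=> hu; pose F z k := pdd p l k * pconv p j (l - k) (z - k) * u (l - z).
have F_supp z k : (k < 0) || (z < k) || (l < z) -> F z k = 0.
  move=> /orP[/orP[k_lt0|z_lt]|l_lt]; rewrite /F.
  - by rewrite pdd_causal ?mul0r.
  - by rewrite pconv_causal ?mulr0 ?mul0r // subr_lt0.
  - by rewrite hu ?mulr0 // subr_lt0.
transitivity (zsum (fun z => zsum (F z))).
  by congr zsum; apply/funext => z; rewrite /zsum mulr_fsuml.
rewrite (zsum_exchange (n := `|l|)) => [|z k hzk|k z hzk];
  [|by apply: F_supp; lia..].
congr zsum; apply/funext => k.
rewrite -(zsum_shift _ k) /pdd_iter /zsum mulr_fsumr; apply: eq_fsbigr => w _.
by rewrite /F addrK -mulrA; congr (_ * (_ * u _)); lia.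
Qed.

Lemma qit_pdd_iter m l : qit q p m l = \sum_(j < m.+1) pdd_iter j (rdd q p) l.
Proof.
elim: m l => [|m IH] l; first by rewrite big_ord1 pdd_iter0.
rewrite /= big_ord_recl pdd_iter0; congr (_ + _).
under eq_bigr do rewrite lift0 (pdd_iterS _ _ rdd_causal).
rewrite -(zsum_sum (n := `|l|)) => [|j]; last first.
  exact: causal_conv_vanishes (pdd_causal l) (pdd_iter_causal j rdd_causal).
by congr zsum; apply/funext => k; rewrite IH mulrC mulr_sumr.
Qed.

Lemma alpha_pdd_iter m l :
  zsum (fun z => rdd q p (l - z) * alpha p l z m%:R)
  = \sum_(j < m.+1) pdd_iter j (rdd q p) l.
Proof.
rewrite -(zsum_sum (n := `|l|)) => [|j]; last first.
  exact: causal_conv_vanishes (pconv_causal j l) rdd_causal.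
congr zsum; apply/funext => z.
by rewrite /alpha ler0n natrK mulr_sumr; apply: eq_bigr => j _; apply: mulrC.
Qed.

End Kernel.

Theorem lemma2 (R : realType) (q : int -> R[i]%C) (p : int -> int -> R[i]%C)
  (hq : forall l : int, l < 0 -> q l = 0)
  (hp : forall l z : int, z < 0 -> p l z = 0)
  (hL0 : p 0 0 != 0) :
  forall (l : int) (m : nat),
    qit q p m l = zsum (fun z => rdd q p (l - z) * alpha p l z m%:R).
Proof.
by move=> l m; rewrite (qit_pdd_iter q hp) (alpha_pdd_iter q hp).
Qed.
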